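(* Let $(\Theta,\mathbf{Q},\leq)$ be a $\Theta$-projective system of size $t$ in a triangulated category $\mathcal{T}$, with triangles $K(i)\to Q(i)\xrightarrow{\beta_i}\Theta(i)\to K(i)[1]$. Then: (a) $\mathrm{Hom}_\mathcal{T}(K(j),\Theta(i))=0=\mathrm{Hom}_\mathcal{T}(\Theta(j),\Theta(i)[1])$ for all $j\ge i$; (b) $\mathrm{Hom}_\mathcal{T}(\beta_j,\Theta(i)):\mathrm{Hom}_\mathcal{T}(\Theta(j),\Theta(i))\to\mathrm{Hom}_\mathcal{T}(Q(j),\Theta(i))$ is an isomorphism of abelian groups for all $j\ge i$; (c) if $\mathrm{Hom}_\mathcal{T}(K(j)[2],\Theta(i))=0$ for all $i,j\in[1,t]$, then $\mathrm{Hom}_\mathcal{T}(\Theta(i),\Theta(j)[-1])=0$ for all $i,j$.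
   Context: $\mathfrak{F}(\mathcal{X})$: objects $M$ admitting distinguished triangles $M_{k-1}\to M_k\to X_k\to M_{k-1}[1]$ ($k=0,\dots,n$), $M_{-1}=0=X_0$, $M_n=M$, $X_k\in\mathcal{X}$ for $k\ge1$. A $\Theta$-projective system of size $t$: $\le$ a linear order on $[1,t]$; $\Theta(1),\dots,\Theta(t)$ non-zero with $\mathrm{Hom}(\Theta(j),\Theta(i))=0$ for $j>i$; $Q(1),\dots,Q(t)$ indecomposable with $Q=\bigoplus Q(i)$ satisfying $\mathrm{Hom}(Q,\Theta(j)[1])=0=\mathrm{Hom}(Q,\Theta(j)[-1])$ for all $j$; for each $i$ a distinguished triangle $K(i)\to Q(i)\xrightarrow{\beta_i}\Theta(i)\to K(i)[1]$ with $K(i)\in\mathfrak{F}(\{\Theta(j):j>i\})$ and $\mathrm{Hom}(K(i)[1],\Theta(i))=0$. Inequalities $j\ge i$, $j>i$ refer to $\le$. *)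

From HB Require Import structures.
From mathcomp Require Import all_boot all_order all_algebra.
Set Implicit Arguments. Unset Strict Implicit. Unset Printing Implicit Defensive.
Import GRing.Theory.
Local Open Scope ring_scope.

Record TriangCat := {
  Ob : Type;
  THom : Ob -> Ob -> zmodType;
  tcomp : forall X Y Z : Ob, THom Y Z -> THom X Y -> THom X Z;
  idm : forall X : Ob, THom X X;
  compA : forall X Y Z W (h : THom Z W) (g : THom Y Z) (f : THom X Y),
      tcomp h (tcomp g f) = tcomp (tcomp h g) f;
  comp1m : forall X Y (f : THom X Y), tcomp (idm Y) f = f;
  compm1 : forall X Y (f : THom X Y), tcomp f (idm X) = f;
  compDl : forall X Y Z (g1 g2 : THom Y Z) (f : THom X Y),
      tcomp (g1 + g2) f = tcomp g1 f + tcomp g2 f;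
  compDr : forall X Y Z (g : THom Y Z) (f1 f2 : THom X Y),
      tcomp g (f1 + f2) = tcomp g f1 + tcomp g f2;
  zero_obj_ex : exists Z : Ob, idm Z = 0;
  biprod_ex : forall A B : Ob, exists (S : Ob) (i1 : THom A S) (i2 : THom B S)
      (p1 : THom S A) (p2 : THom S B),
      [/\ tcomp p1 i1 = idm A, tcomp p2 i2 = idm B, tcomp p1 i2 = 0,
          tcomp p2 i1 = 0 & tcomp i1 p1 + tcomp i2 p2 = idm S];
  sh : Ob -> Ob;
  shm : forall X Y, THom X Y -> THom (sh X) (sh Y);
  shm_id : forall X, shm (idm X) = idm (sh X);
  shm_comp : forall X Y Z (g : THom Y Z) (f : THom X Y),
      shm (tcomp g f) = tcomp (shm g) (shm f);
  shm_add : forall X Y (f g : THom X Y), shm (f + g) = shm f + shm g;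
  ush : Ob -> Ob;
  ushm : forall X Y, THom X Y -> THom (ush X) (ush Y);
  ushm_id : forall X, ushm (idm X) = idm (ush X);
  ushm_comp : forall X Y Z (g : THom Y Z) (f : THom X Y),
      ushm (tcomp g f) = tcomp (ushm g) (ushm f);
  ushm_add : forall X Y (f g : THom X Y), ushm (f + g) = ushm f + ushm g;
  eta : forall X, THom X (sh (ush X));
  eta_inv : forall X, THom (sh (ush X)) X;
  eta_iso1 : forall X, tcomp (eta_inv X) (eta X) = idm X;
  eta_iso2 : forall X, tcomp (eta X) (eta_inv X) = idm (sh (ush X));
  eta_nat : forall X Y (f : THom X Y),
      tcomp (eta Y) f = tcomp (shm (ushm f)) (eta X);
  eps : forall X, THom (ush (sh X)) X;
  eps_inv : forall X, THom X (ush (sh X));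
  eps_iso1 : forall X, tcomp (eps_inv X) (eps X) = idm (ush (sh X));
  eps_iso2 : forall X, tcomp (eps X) (eps_inv X) = idm X;
  eps_nat : forall X Y (f : THom X Y),
      tcomp f (eps X) = tcomp (eps Y) (ushm (shm f));
  tdist : forall X Y Z : Ob, THom X Y -> THom Y Z -> THom Z (sh X) -> Prop;
  TR1_iso : forall X Y Z X' Y' Z' (f : THom X Y) (g : THom Y Z) (h : THom Z (sh X))
      (f' : THom X' Y') (g' : THom Y' Z') (h' : THom Z' (sh X'))
      (a : THom X X') (a' : THom X' X) (b : THom Y Y') (b' : THom Y' Y)
      (c : THom Z Z') (c' : THom Z' Z),
      tcomp a' a = idm X -> tcomp a a' = idm X' ->
      tcomp b' b = idm Y -> tcomp b b' = idm Y' ->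
      tcomp c' c = idm Z -> tcomp c c' = idm Z' ->
      tcomp f' a = tcomp b f -> tcomp g' b = tcomp c g -> tcomp h' c = tcomp (shm a) h ->
      tdist f g h -> tdist f' g' h';
  TR1_id : forall X Z, idm Z = 0 -> tdist (idm X) (0 : THom X Z) (0 : THom Z (sh X));
  TR1_cone : forall X Y (f : THom X Y), exists Z (g : THom Y Z) (h : THom Z (sh X)),
      tdist f g h;
  TR2 : forall X Y Z (f : THom X Y) (g : THom Y Z) (h : THom Z (sh X)),
      tdist f g h <-> tdist g h (- shm f);
  TR3 : forall X Y Z X' Y' Z' (f : THom X Y) (g : THom Y Z) (h : THom Z (sh X))
      (f' : THom X' Y') (g' : THom Y' Z') (h' : THom Z' (sh X'))
      (a : THom X X') (b : THom Y Y'),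
      tdist f g h -> tdist f' g' h' -> tcomp f' a = tcomp b f ->
      exists c : THom Z Z', tcomp g' b = tcomp c g /\ tcomp h' c = tcomp (shm a) h;
  TR4 : forall X Y Z Z' X' Y' (u : THom X Y) (v : THom Y Z)
      (j : THom Y Z') (k : THom Z' (sh X))
      (l : THom Z X') (i : THom X' (sh Y))
      (m : THom Z Y') (n : THom Y' (sh X)),
      tdist u j k -> tdist v l i -> tdist (tcomp v u) m n ->
      exists (f : THom Z' Y') (g : THom Y' X'),
        [/\ tdist f g (tcomp (shm j) i), tcomp m v = tcomp f j, k = tcomp n f,
            l = tcomp g m & tcomp i g = tcomp (shm u) n]
}.

Arguments tcomp {_ X Y Z}.
Arguments idm {_}.
Arguments sh {_}.
Arguments ush {_}.
Arguments shm {_ X Y}.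
Arguments tdist {_ X Y Z}.

Section Notions.
Variable T : TriangCat.

Definition is_zero (X : Ob T) : Prop := idm X = 0.

Definition hom_zero (X Y : Ob T) : Prop := forall f : THom X Y, f = 0.

Definition is_biprod2 (A B S : Ob T) : Prop :=
  exists (i1 : THom A S) (i2 : THom B S) (p1 : THom S A) (p2 : THom S B),
      [/\ tcomp p1 i1 = idm A, tcomp p2 i2 = idm B, tcomp p1 i2 = 0,
          tcomp p2 i1 = 0 & tcomp i1 p1 + tcomp i2 p2 = idm S].

Definition indecomposable (X : Ob T) : Prop :=
  ~ is_zero X /\ forall A B, is_biprod2 A B X -> is_zero A \/ is_zero B.

Definition is_biprod (t : nat) (F : 'I_t -> Ob T) (Q : Ob T) : Prop :=
  exists (inj : forall i, THom (F i) Q) (pr : forall i, THom Q (F i)),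
    (forall i, tcomp (pr i) (inj i) = idm (F i)) /\
    (forall i j, i != j -> tcomp (pr i) (inj j) = 0) /\
    (\sum_(i < t) tcomp (inj i) (pr i) = idm Q).

Inductive filt (P : Ob T -> Prop) : nat -> Ob T -> Prop :=
| filt0 (Mm1 M X0 : Ob T) (f : THom Mm1 M) (g : THom M X0) (h : THom X0 (sh Mm1)) :
    is_zero Mm1 -> is_zero X0 -> tdist f g h -> filt P 0 M
| filtS k (M' M X : Ob T) (f : THom M' M) (g : THom M X) (h : THom X (sh M')) :
    filt P k M' -> P X -> tdist f g h -> filt P k.+1 M.

Definition inF (P : Ob T -> Prop) (M : Ob T) : Prop := exists n, filt P n M.

Definition linear_order (t : nat) (le : rel 'I_t) : Prop :=
  [/\ reflexive le, antisymmetric le, transitive le & total le].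

Definition ltl (t : nat) (le : rel 'I_t) (i j : 'I_t) : bool := le i j && (i != j).

(* Theta-projective system of size t; indices [1,t] represented by 'I_t *)
Definition theta_proj_system (t : nat) (le : rel 'I_t) (Theta Q K : 'I_t -> Ob T)
    (alpha : forall i, THom (K i) (Q i)) (beta : forall i, THom (Q i) (Theta i))
    (gamma : forall i, THom (Theta i) (sh (K i))) : Prop :=
  linear_order le /\
  (forall i, ~ is_zero (Theta i)) /\
  (forall i j, ltl le i j -> hom_zero (Theta j) (Theta i)) /\
  (forall i, indecomposable (Q i)) /\
  (exists Qs, is_biprod Q Qs /\
     forall j, hom_zero Qs (sh (Theta j)) /\ hom_zero Qs (ush (Theta j))) /\
  (forall i, tdist (alpha i) (beta i) (gamma i)) /\
  (forall i, inF (fun X => exists j, ltl le i j /\ X = Theta j) (K i)) /\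
  (forall i, hom_zero (sh (K i)) (Theta i)).

End Notions.
Arguments theta_proj_system {T t} le Theta Q K alpha beta gamma.

(* Everything follows from the long exact Hom(-, W) sequence of a
   distinguished triangle K -> Q -> Theta -> K[1].  Since K(j) is filtered by
   the Theta(k) with k > j, and Hom(Theta(k), Theta(i)) = 0 for k > i, the
   five-term exactness gives Hom(K(j), Theta(i)) = 0 for j >= i; together with
   Hom(K(i)[1], Theta(i)) = 0 (for i = j) or Hom(Theta(j), Theta(i)) = 0 (for
   i < j) this makes precomposition with beta_j bijective.  The vanishing of
   Hom(Q, Theta(i)[1]) and Hom(Q, Theta(j)[-1]) on the summands Q(i) of Q then
   pushes Hom(Theta(j), Theta(i)[1]) and Hom(Theta(i), Theta(j)[-1]) into
   Hom(K(j)[1], Theta(i)[1]) and Hom(K(i)[1], Theta(j)[-1]), which vanish by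
   shifting (a) and the hypothesis of (c). *)
From Pilot Require Import Defs.
From mathcomp Require Import all_boot all_order all_algebra.
Set Implicit Arguments. Unset Strict Implicit. Unset Printing Implicit Defensive.
Import GRing.Theory.
Local Open Scope ring_scope.

Section TriangulatedHom.
Variable T : TriangCat.
Implicit Types X Y Z W : Ob T.

Lemma comp0l X Y Z (f : THom X Y) : tcomp (0 : THom Y Z) f = 0.
Proof. by apply: (addrI (tcomp 0 f)); rewrite addr0 -compDl addr0. Qed.

Lemma comp0r X Y Z (g : THom Y Z) : tcomp g (0 : THom X Y) = 0.
Proof. by apply: (addrI (tcomp g 0)); rewrite addr0 -compDr addr0. Qed.

Lemma compNl X Y Z (g : THom Y Z) (f : THom X Y) : tcomp (- g) f = - tcomp g f.
Proof. by apply/eqP; rewrite -addr_eq0 -compDl addNr comp0l. Qed.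

Lemma compBl X Y Z (g1 g2 : THom Y Z) (f : THom X Y) :
  tcomp (g1 - g2) f = tcomp g1 f - tcomp g2 f.
Proof. by rewrite compDl compNl. Qed.

Lemma shm0 X Y : shm (0 : THom X Y) = 0.
Proof. by apply: (addrI (shm 0)); rewrite addr0 -shm_add addr0. Qed.

Lemma ushm0 X Y : ushm (0 : THom X Y) = 0.
Proof. by apply: (addrI (ushm 0)); rewrite addr0 -ushm_add addr0. Qed.

Lemma hom_to_zero X Z (f : THom X Z) : is_zero Z -> f = 0.
Proof. by move=> Z0; rewrite -(comp1m f) Z0 comp0l. Qed.

Lemma hom_from_zero X Z (f : THom Z X) : is_zero Z -> f = 0.
Proof. by move=> Z0; rewrite -(compm1 f) Z0 comp0r. Qed.

Lemma precomp_bijective X Y W (g : THom X Y) :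
    (forall psi : THom Y W, tcomp psi g = 0 -> psi = 0) ->
    (forall phi : THom X W, exists psi : THom Y W, tcomp psi g = phi) ->
  bijective (fun psi : THom Y W => tcomp psi g).
Proof.
move=> ker0 surj.
have surjb (phi : THom X W) : exists psi, tcomp psi g == phi.
  by have [psi <-] := surj phi; exists psi.
have inj (psi1 psi2 : THom Y W) : tcomp psi1 g = tcomp psi2 g -> psi1 = psi2.
  by move=> E; apply/eqP; rewrite -subr_eq0; apply/eqP/ker0; rewrite compBl E subrr.
exists (fun phi => xchoose (surjb phi)) => [psi | phi].
  by apply: inj; apply/eqP; exact: (xchooseP (surjb _)).
by apply/eqP; exact: (xchooseP (surjb phi)).
Qed.

(* The cone of [X -id-> X] is a zero object; TR3 against its rotation
   (which ends in W[-1][1] ~= W) produces the factorization. *)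
Lemma tdist_factor_snd X Y Z W (f : THom X Y) (g : THom Y Z) (h : THom Z (sh X))
    (phi : THom Y W) :
  tdist f g h -> tcomp phi f = 0 -> exists chi : THom Z W, phi = tcomp chi g.
Proof.
move=> dfgh phif0.
have [Z0 Z0_zero] := zero_obj_ex T.
have /TR2/TR2 did := TR1_id (ush W) Z0_zero.
have sq : tcomp (0 : THom Z0 (sh (ush W))) (0 : THom X Z0)
          = tcomp (tcomp (eta W) phi) f.
  by rewrite comp0l -Defs.compA phif0 comp0r.
have [c [cg _]] := TR3 dfgh did sq.
exists (tcomp (eta_inv W) (- c)).
rewrite -Defs.compA compNl -cg compNl shm_id comp1m opprK Defs.compA eta_iso1.
by rewrite comp1m.
Qed.

Lemma tdist_factor_thd X Y Z W (f : THom X Y) (g : THom Y Z) (h : THom Z (sh X))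
    (psi : THom Z W) :
  tdist f g h -> tcomp psi g = 0 -> exists chi : THom (sh X) W, psi = tcomp chi h.
Proof. by move=> /TR2; exact: tdist_factor_snd. Qed.

Lemma tdist_precomp_surj X Y Z W (f : THom X Y) (g : THom Y Z) (h : THom Z (sh X)) :
    tdist f g h -> hom_zero X W ->
  forall phi : THom Y W, exists psi : THom Z W, tcomp psi g = phi.
Proof.
by move=> dfgh XW0 phi; have [chi ->] := tdist_factor_snd dfgh (XW0 (tcomp phi f)); exists chi.
Qed.

Lemma tdist_precomp_eq0 X Y Z W (f : THom X Y) (g : THom Y Z) (h : THom Z (sh X))
    (psi : THom Z W) :
  tdist f g h -> hom_zero (sh X) W -> tcomp psi g = 0 -> psi = 0.
Proof. by move=> dfgh XW0 /(tdist_factor_thd dfgh) [chi ->]; rewrite (XW0 chi) comp0l. Qed.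

Lemma hom_zero_sh X Y : hom_zero X Y -> hom_zero (sh X) (sh Y).
Proof.
move=> XY0 chi.
have uchi0 : ushm chi = 0.
  have -> : ushm chi = tcomp (eps_inv Y)
      (tcomp (tcomp (eps Y) (tcomp (ushm chi) (eps_inv X))) (eps X)).
    by rewrite -!Defs.compA eps_iso1 compm1 Defs.compA eps_iso1 comp1m.
  by rewrite (XY0 (tcomp _ _)) comp0l comp0r.
have etachi := eta_nat chi.
rewrite uchi0 shm0 comp0l in etachi.
by rewrite -(comp1m chi) -eta_iso1 -Defs.compA etachi comp0r.
Qed.

Lemma hom_zero_ush X Y : hom_zero (sh X) Y -> hom_zero X (ush Y).
Proof.
move=> XY0 chi.
have schi0 : shm chi = 0.
  by rewrite -(comp1m (shm chi)) -eta_iso2 -Defs.compA (XY0 (tcomp _ _)) comp0r.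
have epschi := eps_nat chi.
rewrite schi0 ushm0 comp0r in epschi.
by rewrite -(compm1 chi) -eps_iso2 Defs.compA epschi comp0l.
Qed.

Lemma hom_zero_inF (P : Ob T -> Prop) M W :
  inF P M -> (forall X, P X -> hom_zero X W) -> hom_zero M W.
Proof.
move=> [n]; elim=> [M1 {}M X0 f g h M1_0 X0_0 d | k M' {}M X f g h _ IH PX d] PW phi.
- have [chi ->] := tdist_factor_snd d (hom_from_zero (tcomp phi f) M1_0).
  by rewrite (hom_to_zero g X0_0) comp0r.
- have [chi ->] := tdist_factor_snd d (IH PW (tcomp phi f)).
  by rewrite (PW _ PX chi) comp0l.
Qed.

Lemma hom_zero_biprod_summand t (F : 'I_t -> Ob T) S W i :
  is_biprod F S -> hom_zero S W -> hom_zero (F i) W.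
Proof.
move=> [inj [pr [prinj _]]] SW0 phi.
by rewrite -(compm1 phi) -prinj Defs.compA (SW0 (tcomp phi (pr i))) comp0l.
Qed.

End TriangulatedHom.

Lemma linear_order_le_ltl_trans t (le : rel 'I_t) i j k :
  linear_order le -> le i j -> ltl le j k -> ltl le i k.
Proof.
move=> [_ le_anti le_trans _] lij /andP [ljk njk].
rewrite /ltl (le_trans _ _ _ lij ljk); apply/eqP => Eik; subst k.
by move/eqP: njk; apply; apply: le_anti; rewrite lij ljk.
Qed.

Section ThetaProjectiveSystem.
Variables (T : TriangCat) (t : nat) (le : rel 'I_t) (Theta Q K : 'I_t -> Ob T).
Variables (alpha : forall i, THom (K i) (Q i)) (beta : forall i, THom (Q i) (Theta i)).
Variable gamma : forall i, THom (Theta i) (sh (K i)).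
Hypothesis le_order : linear_order le.
Unset Implicit Arguments.
Hypothesis Theta_ltl0 : forall i j, ltl le i j -> hom_zero (Theta j) (Theta i).
Hypothesis K_Q_Theta : forall i, tdist (alpha i) (beta i) (gamma i).
Hypothesis K_filt : forall i, inF (fun X => exists j, ltl le i j /\ X = Theta j) (K i).
Hypothesis shK_Theta0 : forall i, hom_zero (sh (K i)) (Theta i).
Set Implicit Arguments.

Lemma hom_zero_K_Theta i j : le i j -> hom_zero (K j) (Theta i).
Proof.
move=> lij; apply: hom_zero_inF (K_filt j) _ => _ [k [ljk ->]].
exact/Theta_ltl0/(linear_order_le_ltl_trans le_order lij).
Qed.

Lemma hom_zero_Theta_shTheta Qs i j : le i j ->
    is_biprod Q Qs -> hom_zero Qs (sh (Theta i)) ->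
  hom_zero (Theta j) (sh (Theta i)).
Proof.
move=> lij Qsum QsTheta0 psi.
apply: tdist_precomp_eq0 (K_Q_Theta j) _ _.
  exact/hom_zero_sh/hom_zero_K_Theta.
exact: hom_zero_biprod_summand Qsum QsTheta0 _.
Qed.

Lemma precomp_beta_bijective i j : le i j ->
  bijective (fun f : THom (Theta j) (Theta i) => tcomp f (beta j)).
Proof.
move=> lij; apply: precomp_bijective; last first.
  exact: tdist_precomp_surj (K_Q_Theta j) (hom_zero_K_Theta lij).
case: (eqVneq i j) => [<- | nij] psi.
  exact: tdist_precomp_eq0 (K_Q_Theta i) (shK_Theta0 i).
by move=> _; apply: (Theta_ltl0 i j); rewrite /ltl lij nij.
Qed.

Lemma hom_zero_Theta_ushTheta Qs i j :
    is_biprod Q Qs -> hom_zero Qs (ush (Theta j)) ->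
    hom_zero (sh (sh (K i))) (Theta j) ->
  hom_zero (Theta i) (ush (Theta j)).
Proof.
move=> Qsum QsTheta0 shshK0 psi.
apply: tdist_precomp_eq0 (K_Q_Theta i) _ _; first exact: hom_zero_ush.
exact: hom_zero_biprod_summand Qsum QsTheta0 _.
Qed.

End ThetaProjectiveSystem.

Theorem proposition5p5 (T : TriangCat) (t : nat) (le : rel 'I_t)
    (Theta Q K : 'I_t -> Ob T)
    (alpha : forall i, THom (K i) (Q i)) (beta : forall i, THom (Q i) (Theta i))
    (gamma : forall i, THom (Theta i) (sh (K i))) :
  theta_proj_system le Theta Q K alpha beta gamma ->
  [/\ (* (a) *)
      (forall i j, le i j ->
         hom_zero (K j) (Theta i) /\ hom_zero (Theta j) (sh (Theta i))),
      (* (b) THom(beta_j, Theta i) is an isomorphism of abelian groups *)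
      (forall i j, le i j ->
         {morph (fun f : THom (Theta j) (Theta i) => tcomp f (beta j)) : x y / x + y}
         /\ bijective (fun f : THom (Theta j) (Theta i) => tcomp f (beta j)))
    & (* (c) *)
      ((forall i j, hom_zero (sh (sh (K j))) (Theta i)) ->
       forall i j, hom_zero (Theta i) (ush (Theta j)))].
Proof.
move=> [lin [_ [Theta0 [_ [[Qs [Qsum QsTheta0]] [tri [Kfilt shK0]]]]]]].
split=> [i j lij | i j lij | shshK0 i j].
- split; first exact: (hom_zero_K_Theta lin Theta0 Kfilt lij).
  exact: (hom_zero_Theta_shTheta lin Theta0 tri Kfilt lij Qsum (QsTheta0 i).1).
- split; first by move=> x y /=; rewrite compDl.
  exact: (precomp_beta_bijective lin Theta0 tri Kfilt shK0 lij).
- exact: (hom_zero_Theta_ushTheta tri Qsum (QsTheta0 j).2 (shshK0 j i)).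
Qed.
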